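(* Let $q$ be a prime power, let $\Gamma$ be a projective bundle in $\mathrm{PG}(2,q)$, let $A$ be the binary point-line incidence matrix of $\mathrm{PG}(2,q)$ and $B$ the binary point-oval incidence matrix of $\Gamma$ (rows indexed by points in the same order), and let $H=(A\mid B)$. Then the maximum column intersection of $H$ equals $2$. Consequently, one round of the bit-flipping decoding algorithm with respect to $H$ corrects every error of Hamming weight at most $\lfloor\frac{q+1}{4}\rfloor$ in the code $C=\ker(H)=\{c\in\mathbb{F}_2^{2(q^2+q+1)}: cH^\top=0\}$; that is, for every $c\in C$ and $e$ with $\mathrm{wt}(e)\le\lfloor\frac{q+1}{4}\rfloor$, one round applied to $c+e$ outputs $c$.
   Context: $\mathrm{PG}(2,q)$ is the projective plane whose points and lines are the 1- and 2-dimensional subspaces of $\mathbb{F}_q^3$. An oval is a set of $q+1$ points such that every line meets it in at most two points. A projective bundle is a collection of $q^2+q+1$ ovals of $\mathrm{PG}(2,q)$ any two of which intersect in exactly one point. Incidence matrices have entry $1$ iff the point (row) lies on the line/oval (column). The maximum column intersection of a binary matrix is the maximum, over pairs of distinct columns, of the number of rows in which both columns have a $1$. $H$ has constant column weight $v=q+1$. One round of the bit-flipping algorithm on input $y$ for a binary matrix $H$ of constant column weight $v$: compute $s=Hy^\top$; for each column $j$ let $u_j$ be the number of rows $i$ with $H_{ij}=1$ and $s_i=1$; output $y$ with the bits in positions $\{j: u_j>v/2\}$ flipped. *)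

From HB Require Import structures.
From mathcomp Require Import all_boot all_order all_algebra all_field.
Set Implicit Arguments. Unset Strict Implicit. Unset Printing Implicit Defensive.
Import GRing.Theory.
Local Open Scope ring_scope.

Section PG2.
Variable F : finFieldType.

(* A k-dimensional subspace of F^3, represented canonically by the square
   matrix <<A>>%MS generating it (row space). *)
Definition is_subsp (k : nat) (A : 'M[F]_3) : bool :=
  (\rank A == k)%N && (<<A>>%MS == A).

Definition pg_point := {A : 'M[F]_3 | is_subsp 1 A}.
Definition pg_line  := {A : 'M[F]_3 | is_subsp 2 A}.

Definition incident (P : pg_point) (L : pg_line) : bool :=
  (val P <= val L)%MS.

Definition is_oval (O : {set pg_point}) : bool :=
  (#|O| == #|F|.+1)%N &&
  [forall L : pg_line, #|[set P in O | incident P L]| <= 2]%N.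

Definition bundle_size : nat := (#|F| ^ 2 + #|F| + 1)%N.

Definition is_projective_bundle (G : 'I_bundle_size -> {set pg_point}) : Prop :=
  injective G /\ (forall i, is_oval (G i)) /\
  (forall i j, i != j -> #|G i :&: G j| = 1%N).

Definition hcol := (pg_line + 'I_bundle_size)%type.

Definition Hmat (G : 'I_bundle_size -> {set pg_point}) (P : pg_point) (c : hcol)
  : bool :=
  match c with
  | inl L => incident P L
  | inr i => P \in G i
  end.
End PG2.

Section Binary.
Variables (R C : finType) (H : R -> C -> bool).

Definition max_col_intersection : nat :=
  \max_(jk : C * C | jk.1 != jk.2) #|[set i | H i jk.1 && H i jk.2]|.

Definition syndrome (y : {ffun C -> 'F_2}) (i : R) : 'F_2 :=
  \sum_(j | H i j) y j.

Definition in_code (c : {ffun C -> 'F_2}) : Prop :=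
  forall i, syndrome c i = 0.

Definition hweight (y : {ffun C -> 'F_2}) : nat := #|[set j | y j != 0]|.

Definition unsat (y : {ffun C -> 'F_2}) (j : C) : nat :=
  #|[set i | H i j && (syndrome y i == 1)]|.

(* one round of bit flipping, column weight v: flip j iff u_j > v/2 *)
Definition bitflip_round (v : nat) (y : {ffun C -> 'F_2}) : {ffun C -> 'F_2} :=
  [ffun j => if (v < 2 * unsat y j)%N then y j + 1 else y j].
End Binary.

(* Two distinct lines of PG(2,q) share at most one point, a line meets an oval
   in at most two points and two ovals of the bundle share exactly one point, so
   two columns of H = (A | B) share at most two rows; a line through two points
   of an oval attains this bound.  For bit flipping with t errors and column
   weight v = q + 1 >= 4t: every unsatisfied check through a correct position
   contains an error position, so such a position sees at most 2t <= v/2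
   unsatisfied checks, while every check through an error position j that
   contains no other error position is unsatisfied, so j sees at least
   v - 2(t - 1) > v/2 of them. *)

From mathcomp Require Import all_boot all_order all_algebra all_field.
From mathcomp Require Import zify ring.
Import GRing.Theory.
Local Open Scope ring_scope.
Set Implicit Arguments. Unset Strict Implicit.

Section ProjectivePlane.
Variable F : finFieldType.

Lemma is_subsp_rank k (A : 'M[F]_3) : is_subsp k A -> \rank A = k.
Proof. by case/andP=> /eqP. Qed.

Lemma is_subsp_genmx k (A : 'M[F]_3) : is_subsp k A -> <<A>>%MS = A.
Proof. by case/andP=> _ /eqP. Qed.

Lemma is_subsp_genmx_rank m (A : 'M[F]_(m, 3)) : is_subsp (\rank A) <<A>>%MS.
Proof. by rewrite /is_subsp genmxE eqxx genmx_id eqxx. Qed.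

Lemma is_subsp_sub_eq k (A B : 'M[F]_3) :
  is_subsp k A -> is_subsp k B -> (A <= B)%MS -> A = B.
Proof.
move=> kA kB sAB; rewrite -(is_subsp_genmx kA) -(is_subsp_genmx kB).
apply/genmxP; rewrite sAB -(mxrank_leqif_sup sAB).2.
by rewrite (is_subsp_rank kA) (is_subsp_rank kB) eqxx.
Qed.

Lemma rank_adds_points (P1 P2 : pg_point F) :
  P1 != P2 -> \rank (val P1 + val P2)%MS = 2%N.
Proof.
move=> nP12.
have r1 := is_subsp_rank (valP P1); have r2 := is_subsp_rank (valP P2).
have le2 : (\rank (val P1 + val P2)%MS <= 2)%N.
  by have := (mxrank_adds_leqif (val P1) (val P2)).1; rewrite r1 r2.
have nP21 : ~~ (val P2 <= val P1)%MS.
  apply: contra nP12 => /(is_subsp_sub_eq (valP P2) (valP P1)) e.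
  by rewrite eq_sym; apply/eqP/val_inj.
have : (val P1 < val P1 + val P2)%MS by rewrite ltmxE addsmxSl addsmx_sub submx_refl.
by move/rank_ltmx; rewrite r1; lia.
Qed.

Lemma line_sub_points (P1 P2 : pg_point F) (L : pg_line F) :
  P1 != P2 -> incident P1 L -> incident P2 L -> (val L <= val P1 + val P2)%MS.
Proof.
move=> nP12 P1L P2L.
have sPL : (val P1 + val P2 <= val L)%MS by rewrite addsmx_sub; apply/andP.
by rewrite -(mxrank_leqif_sup sPL).2 rank_adds_points // (is_subsp_rank (valP L)).
Qed.

Lemma card_lines_meet (L1 L2 : pg_line F) :
  L1 != L2 -> (#|[set P | incident P L1 && incident P L2]| <= 1)%N.
Proof.
rewrite leqNgt; apply: contra => /card_gt1P[P1 [P2 [+ + nP12]]].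
rewrite !inE => /andP[P1L1 P1L2] /andP[P2L1 P2L2].
apply/eqP/val_inj/(is_subsp_sub_eq (valP L1) (valP L2)).
apply: submx_trans (line_sub_points nP12 P1L1 P2L1) _.
by rewrite addsmx_sub; apply/andP.
Qed.

Lemma exists_line (P1 P2 : pg_point F) :
  P1 != P2 -> exists L : pg_line F, incident P1 L && incident P2 L.
Proof.
move=> nP12; have := is_subsp_genmx_rank (val P1 + val P2)%MS.
rewrite rank_adds_points // => L2; exists (Sub _ L2).
by rewrite /incident /= !genmxE addsmxSl addsmxSr.
Qed.

Section LineThroughTwoVectors.
Variables u w : 'rV[F]_3.
Hypotheses (u_neq0 : u != 0) (w_notin_u : ~~ (w <= u)%MS).

Lemma lincomb_eq0 (x y : F) : x *: u + y *: w = 0 -> x = 0 /\ y = 0.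
Proof.
move=> e; have y0 : y = 0.
  apply/eqP; apply: contraNT w_notin_u => y_neq0.
  have yw : y *: w = - (x *: u) by apply/eqP; rewrite -addr_eq0 addrC e.
  rewrite -[w]scale1r -(mulVf y_neq0) -scalerA yw.
  by rewrite scalemx_sub // eqmx_opp scalemx_sub.
split=> //; move/eqP: e; rewrite y0 scale0r addr0 scaler_eq0 (negbTE u_neq0) orbF.
by move/eqP.
Qed.

Definition line_vec (a : option F) : 'rV[F]_3 :=
  if a is Some x then u + x *: w else w.

Lemma line_vec_neq0 a : line_vec a != 0.
Proof.
case: a => [x|] /=; last by apply: contraNneq w_notin_u => ->; apply: sub0mx.
by apply/eqP; rewrite -[u]scale1r => /lincomb_eq0[/eqP]; rewrite oner_eq0.
Qed.

Lemma genmx_line_vec_inj : injective (fun a => <<line_vec a>>%MS).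
Proof.
have proportional a b : <<line_vec a>>%MS = <<line_vec b>>%MS ->
    exists k, line_vec a = k *: line_vec b.
  by move/genmxP/andP=> [/sub_rVP].
move=> [x|] [y|] /proportional[k /= e] //.
- have : (1 - k) *: u + (x - k * y) *: w = 0.
    by rewrite -[RHS](subrr (u + x *: w)) {2}e; apply/rowP => j; rewrite !mxE; ring.
  case/lincomb_eq0 => /eqP; rewrite subr_eq0 => /eqP <- /eqP.
  by rewrite mul1r subr_eq0 => /eqP ->.
- have : 1 *: u + (x - k) *: w = 0.
    by rewrite -[RHS](subrr (u + x *: w)) {2}e; apply/rowP => j; rewrite !mxE; ring.
  by case/lincomb_eq0 => /eqP; rewrite oner_eq0.
- have : k *: u + (k * y - 1) *: w = 0.
    by rewrite -[RHS](subrr w) {2}e; apply/rowP => j; rewrite !mxE; ring.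
  by case/lincomb_eq0 => -> /eqP; rewrite mul0r sub0r oppr_eq0 oner_eq0.
Qed.

End LineThroughTwoVectors.

Lemma card_line (L : pg_line F) : (#|F|.+1 <= #|[set P | incident P L]|)%N.
Proof.
have rL := is_subsp_rank (valP L).
pose u := nz_row (val L).
have u_neq0 : u != 0 by rewrite nz_row_eq0 -mxrank_eq0 rL.
have [i w_notin_u] : exists i, ~~ (row i (val L) <= u)%MS.
  by apply/row_subPn/negP => /mxrankS; rewrite rL rank_rV u_neq0.
pose w := row i (val L).
have line_vec_sub a : (line_vec u w a <= val L)%MS.
  by case: a => [x|] /=; rewrite ?addmx_sub ?scalemx_sub ?nz_row_sub ?row_sub.
rewrite -card_option -(card_imset _ (genmx_line_vec_inj u_neq0 w_notin_u)).
rewrite -(card_imset [set P | incident P L] val_inj).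
apply/subset_leq_card/subsetP => _ /imsetP[a _ ->].
have := is_subsp_genmx_rank (line_vec u w a).
rewrite rank_rV line_vec_neq0 // => pt.
by apply/imsetP; exists (Sub _ pt); rewrite // inE /incident genmxE.
Qed.

Lemma oval_card (O : {set pg_point F}) : is_oval O -> #|O| = #|F|.+1.
Proof. by case/andP=> /eqP. Qed.

Lemma oval_line_meet (O : {set pg_point F}) (L : pg_line F) :
  is_oval O -> (#|[set P in O | incident P L]| <= 2)%N.
Proof. by case/andP=> _ /forallP. Qed.

End ProjectivePlane.

Lemma F2_neq0 (x : 'F_2) : x != 0 -> x = 1.
Proof. by case: x => [[|[|n]] //= lt_n2] _; apply/val_inj. Qed.

Lemma card_bigcup_leq (I T : finType) (S : {set I}) (B : I -> {set T}) :
  (#|\bigcup_(k in S) B k| <= \sum_(k in S) #|B k|)%N.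
Proof.
elim/big_rec2: _ => [|k n U _ le_Un]; first by rewrite cards0.
by apply: leq_trans (leq_card_setU _ U).1 _; rewrite leq_add2l.
Qed.

Section BitFlipping.
Variables (R C : finType) (H : R -> C -> bool).

Local Notation colI j k := [set i | H i j && H i k].

Lemma card_col_intersection_leq_max j k :
  j != k -> (#|colI j k| <= max_col_intersection H)%N.
Proof. by move=> njk; apply: (leq_bigmax_cond (j, k)). Qed.

Lemma syndromeD (c e : {ffun C -> 'F_2}) i :
  syndrome H [ffun j => c j + e j] i = syndrome H c i + syndrome H e i.
Proof. by rewrite /syndrome -big_split; apply: eq_bigr => j _; rewrite ffunE. Qed.

Lemma syndrome_neq0 (e : {ffun C -> 'F_2}) i :
  syndrome H e i != 0 -> exists2 k, H i k & e k != 0.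
Proof.
have [k /andP[Hik ek] _|e0] := pickP (fun k => H i k && (e k != 0)); first by exists k.
rewrite /syndrome big1 ?eqxx // => k Hik.
by apply/eqP; move: (e0 k); rewrite Hik => /negbFE.
Qed.

Lemma syndrome_single (e : {ffun C -> 'F_2}) i j : H i j ->
  (forall k, k != j -> H i k -> e k = 0) -> syndrome H e i = e j.
Proof.
move=> Hij e0; rewrite /syndrome (bigD1 j) //= big1 ?addr0 // => k /andP[Hik nkj].
exact: e0.
Qed.

Variables (c e : {ffun C -> 'F_2}).
Hypothesis c_code : in_code H c.

Let y := [ffun j => c j + e j].
Let S := [set k | e k != 0].

Lemma syndrome_received i : syndrome H y i = syndrome H e i.
Proof. by rewrite syndromeD c_code add0r. Qed.

Lemma unsat_correct_bit j :
  e j = 0 -> (unsat H y j <= max_col_intersection H * hweight e)%N.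
Proof.
move=> ej0; have unsat_sub : [set i | H i j && (syndrome H y i == 1)] \subset
    \bigcup_(k in S) colI j k.
  apply/subsetP => i; rewrite inE syndrome_received => /andP[Hij /eqP s1].
  have [k Hik ek] : exists2 k, H i k & e k != 0 by apply: syndrome_neq0; rewrite s1.
  by apply/bigcupP; exists k; rewrite !inE ?Hij ?Hik.
apply: leq_trans (subset_leq_card unsat_sub) _.
apply: leq_trans (card_bigcup_leq _ _) _.
rewrite mulnC -sum_nat_const leq_sum // => k; rewrite inE => ek.
by apply: card_col_intersection_leq_max; apply: contraNneq ek => <-; rewrite ej0.
Qed.

Lemma unsat_error_bit j : e j != 0 ->
  (#|[set i | H i j]| <= unsat H y j + max_col_intersection H * (hweight e).-1)%N.
Proof.
move=> ej; have jS : j \in S by rewrite inE.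
set B := \bigcup_(k in S :\ j) colI j k.
have col_sub : [set i | H i j] \subset [set i | H i j && (syndrome H y i == 1)] :|: B.
  apply/subsetP => i; rewrite !inE => Hij.
  have [iB|niB] := boolP (i \in B); first by apply/orP; right.
  apply/orP; left; rewrite Hij syndrome_received (syndrome_single Hij) ?(F2_neq0 ej) //.
  move=> k nkj Hik.
  apply/eqP; apply: contraNT niB => ek; apply/bigcupP; exists k.
    by rewrite !inE nkj.
  by rewrite inE Hij Hik.
have card_B : (#|B| <= max_col_intersection H * (hweight e).-1)%N.
  apply: leq_trans (card_bigcup_leq _ _) _.
  rewrite /hweight -/S (cardsD1 j S) jS mulnC -sum_nat_const leq_sum // => k.
  by rewrite !inE => /andP[nkj _]; apply: card_col_intersection_leq_max; rewrite eq_sym.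
apply: leq_trans (subset_leq_card col_sub) _.
by apply: leq_trans (leq_card_setU _ _).1 _; rewrite leq_add2l.
Qed.

Theorem bitflip_round_corrects v : (0 < v)%N ->
  (forall j, v <= #|[set i | H i j]|)%N ->
  (2 * max_col_intersection H * hweight e <= v)%N ->
  bitflip_round H v y = c.
Proof.
move=> v_gt0 col_weight; rewrite -mulnA => small_e.
apply/ffunP => j; rewrite ffunE.
have [ej|/negPn/eqP ej0] := boolP (e j != 0); last first.
  by rewrite ifN ?ffunE ?ej0 ?addr0 //; have := unsat_correct_bit ej0; lia.
rewrite ifT.
  by rewrite !ffunE (F2_neq0 ej) -addrA (addrr_pchar2 (pchar_Fp _)) ?addr0.
have t_gt0 : (0 < hweight e)%N by rewrite card_gt0; apply/set0Pn; exists j; rewrite inE.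
have := unsat_error_bit ej; have := col_weight j.
case: (hweight e) t_gt0 small_e => // t _; rewrite mulnS.
have [-> | m_gt0] := posnP (max_col_intersection H); rewrite ?mul0n; lia.
Qed.

End BitFlipping.

Section ProjectiveBundleCode.
Variables (F : finFieldType) (G : 'I_(bundle_size F) -> {set pg_point F}).
Hypotheses (G_oval : forall i, is_oval (G i))
           (G_meet : forall i j, i != j -> #|G i :&: G j| = 1%N).

Lemma Hmat_col_weight j : (#|F|.+1 <= #|[set P | Hmat G P j]|)%N.
Proof.
case: j => [L|i]; first exact: card_line.
by rewrite -(oval_card (G_oval i)) subset_leq_card //; apply/subsetP => P; rewrite inE.
Qed.

Lemma Hmat_col_intersection_leq2 j k :
  j != k -> (#|[set P | Hmat G P j && Hmat G P k]| <= 2)%N.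
Proof.
case: j k => [L1|i1] [L2|i2] /= njk.
- exact: leq_trans (card_lines_meet njk) _.
- apply: leq_trans (oval_line_meet L1 (G_oval i2)).
  by apply/subset_leq_card/subsetP => P; rewrite !inE andbC.
- apply: leq_trans (oval_line_meet L2 (G_oval i1)).
  by apply/subset_leq_card/subsetP => P; rewrite !inE.
- have -> : [set P | (P \in G i1) && (P \in G i2)] = G i1 :&: G i2.
    by apply/setP => P; rewrite !inE.
  by rewrite G_meet //; apply: contraNneq njk => ->.
Qed.

Lemma max_col_intersection_Hmat : max_col_intersection (Hmat G) = 2%N.
Proof.
apply/eqP; rewrite eqn_leq; apply/andP; split.
  by apply/bigmax_leqP => -[j k] /= njk; apply: Hmat_col_intersection_leq2.
have i0 : 'I_(bundle_size F) by apply: (@Ordinal _ 0); rewrite /bundle_size addn1.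
have : (1 < #|G i0|)%N.
  by rewrite (oval_card (G_oval i0)) ltnS; apply/card_gt0P; exists 0.
case/card_gt1P => [P1 [P2 [P1G P2G nP12]]].
have [L /andP[P1L P2L]] := exists_line nP12.
apply: leq_trans (card_col_intersection_leq_max _ (_ : inl L != inr i0)) => //=.
apply: leq_trans (_ : 2 <= #|[set P1; P2]|)%N _; first by rewrite cards2 nP12.
by apply/subset_leq_card/subsetP => P; rewrite !inE => /orP[] /eqP->; apply/andP.
Qed.

End ProjectiveBundleCode.

Theorem proposition4p14 (F : finFieldType)
  (G : 'I_(bundle_size F) -> {set pg_point F}) :
  is_projective_bundle G ->
  max_col_intersection (Hmat G) = 2%N /\
  (forall c e : {ffun hcol F -> 'F_2},
     in_code (Hmat G) c ->
     (hweight e <= (#|F|.+1) %/ 4)%N ->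
     bitflip_round (Hmat G) #|F|.+1 [ffun j => c j + e j] = c).
Proof.
move=> [_ [G_oval G_meet]]; have max2 := max_col_intersection_Hmat G_oval G_meet.
split=> // c e c_code small_e.
apply: bitflip_round_corrects => //; first exact: Hmat_col_weight.
by rewrite max2; lia.
Qed.
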